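(* Let $G$ be a finitely generated group, $p$ a prime, $x\in G$, and $k\ge 0$ an integer. Then $RG_p\big(G/\langle\langle x^{p^k}\rangle\rangle\big)\ge RG_p(G)-\frac{1}{p^k}$.
   Context: $\langle\langle y\rangle\rangle$ denotes the normal closure of $y$ in $G$. For a group $A$, $d(A)$ is the minimal number of generators and $d_p(A)=d\big(A/[A,A]A^p\big)$. For a finitely generated group $G$, $RG_p(G)=\inf_H\frac{d_p(H)-1}{[G:H]}$, the infimum over normal subgroups $H\trianglelefteq G$ of $p$-power index. *)

From HB Require Import structures.
From mathcomp Require Import all_boot all_order all_algebra.
From mathcomp Require Import boolp classical_sets reals.
Set Implicit Arguments. Unset Strict Implicit. Unset Printing Implicit Defensive.
Import Order.TTheory GRing.Theory Num.Theory.

Record groupOps := GroupOps {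
  gcar :> Type;
  gmul : gcar -> gcar -> gcar;
  ginv : gcar -> gcar;
  gone : gcar }.

Definition is_group (G : groupOps) : Prop :=
  [/\ (forall x y z : G, gmul x (gmul y z) = gmul (gmul x y) z),
      (forall x : G, gmul (gone G) x = x) &
      (forall x : G, gmul (ginv x) x = gone G)].

Section GroupDefs.
Variable G : groupOps.
Local Open Scope classical_set_scope.

Definition subgroup (H : set G) : Prop :=
  [/\ H (gone G), (forall x y, H x -> H y -> H (gmul x y)) &
      (forall x, H x -> H (ginv x))].

Definition normal (H : set G) : Prop :=
  subgroup H /\ forall g h, H h -> H (gmul (ginv g) (gmul h g)).

Definition gen (S : set G) : set G :=
  fun x => forall K, subgroup K -> S `<=` K -> K x.

Definition finitely_generated : Prop :=
  exists n (f : 'I_n -> G), gen (range f) = setT.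

Definition gexp (x : G) (n : nat) : G := iter n (gmul x) (gone G).

Definition gcomm (a b : G) : G := gmul (ginv a) (gmul (ginv b) (gmul a b)).

Definition normal_closure (y : G) : set G :=
  gen [set z | exists g, z = gmul (ginv g) (gmul y g)].

Definition frattini_p (p : nat) (H : set G) : set G :=
  gen [set y | (exists a b, [/\ H a, H b & y = gcomm a b]) \/
               (exists c, H c /\ y = gexp c p)].

(* H/[H,H]H^p is generated by (the images of) d elements of H *)
Definition gen_mod_p (p : nat) (H : set G) (d : nat) : Prop :=
  exists a : 'I_d -> G, (forall i, H (a i)) /\
    gen (range a `|` frattini_p p H) = H.

Definition dp (p : nat) (H : set G) : nat :=
  xget 0%N [set d | gen_mod_p p H d /\ forall d', gen_mod_p p H d' -> (d <= d')%N].

Definition lcoset (g : G) (N : set G) : set G := fun x => N (gmul (ginv g) x).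

(* [G : H] = m : the left cosets of H are in bijection with 'I_m *)
Definition has_index (H : set G) (m : nat) : Prop :=
  exists f : 'I_m -> G, forall g, exists! i, lcoset (f i) H g.

Definition RGp (R : realType) (p : nat) : R :=
  inf [set r : R | exists H n, [/\ normal H, has_index H (p ^ n)%N &
         r = (((dp p H)%:R - 1) / ((p ^ n)%N)%:R)%R]].

(* quotient group G / N (meaningful when N is normal) : left cosets of N *)
Definition qcar (N : set G) : Type := {A : set G | exists g, A = lcoset g N}.
Definition qrep (N : set G) (A : qcar N) : G := projT1 (cid (proj2_sig A)).
Definition qmk (N : set G) (g : G) : qcar N :=
  exist _ (lcoset g N) (ex_intro _ g erefl).

Definition quot (N : set G) : groupOps :=
  @GroupOps (qcar N) (fun A B => qmk N (gmul (qrep A) (qrep B)))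
    (fun A => qmk N (ginv (qrep A))) (qmk N (gone G)).
End GroupDefs.

(* Let N be the normal closure of y = x^(p^k) and let H be the preimage in G of
   a normal subgroup K of G/N of index p^n.  Modulo [H,H]H^p, H is generated by
   lifts of generators of K together with the conjugates of y.  A conjugate
   y^(z f h) with z in <x> and h in H equals y^f times a commutator, so one
   conjugate per <x>-orbit on G/H suffices.  If x^(p^j) lies in H for some
   j < k, then y is a p-th power in H and no conjugate is needed at all;
   otherwise every orbit has p^k elements, so there are at most p^n / p^k of
   them.  Hence d_p(H) <= d_p(K) + p^n / p^k, which rearranges to the bound. *)
From HB Require Import structures.
From mathcomp Require Import all_boot all_order all_algebra.
From mathcomp Require Import boolp classical_sets reals.
From mathcomp Require Import lra.
Import Order.TTheory GRing.Theory Num.Theory.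
Set Implicit Arguments. Unset Strict Implicit. Unset Printing Implicit Defensive.
Local Open Scope classical_set_scope.

Local Notation "a *g b" := (gmul a b) (at level 40, left associativity).
Local Notation "a ^-1g" := (ginv a) (at level 3, format "a ^-1g").
Local Notation "h ^g g" := ((ginv g) *g (h *g g)) (at level 30).

Section GroupLaws.
Variable G : groupOps.
Hypothesis gG : is_group G.
Local Notation "1g" := (gone G).

Lemma mulgA (a b c : G) : a *g (b *g c) = a *g b *g c.
Proof. by case: gG. Qed.
Lemma mul1g (a : G) : 1g *g a = a.
Proof. by case: gG. Qed.
Lemma mulVg (a : G) : a^-1g *g a = 1g.
Proof. by case: gG. Qed.
Lemma mulKg (a b : G) : a^-1g *g (a *g b) = b.
Proof. by rewrite mulgA mulVg mul1g. Qed.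
Lemma mulgI (a b c : G) : a *g b = a *g c -> b = c.
Proof. by move=> e; rewrite -(mulKg a b) e mulKg. Qed.
Lemma mulgV (a : G) : a *g a^-1g = 1g.
Proof. by rewrite -{1}(mul1g (a *g a^-1g)) -{1}(mulVg (a^-1g)) -mulgA (mulKg a) mulVg. Qed.
Lemma mulg1 (a : G) : a *g 1g = a.
Proof. by rewrite -(mulVg a) mulgA mulgV mul1g. Qed.
Lemma mulKVg (a b : G) : a *g (a^-1g *g b) = b.
Proof. by rewrite mulgA mulgV mul1g. Qed.
Lemma mulgK (a b : G) : b *g a *g a^-1g = b.
Proof. by rewrite -mulgA mulgV mulg1. Qed.
Lemma invgK (a : G) : (a^-1g)^-1g = a.
Proof. by apply: (@mulgI (a^-1g)); rewrite mulgV mulVg. Qed.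
Lemma invMg (a b : G) : (a *g b)^-1g = b^-1g *g a^-1g.
Proof. by apply: (@mulgI (a *g b)); rewrite mulgV -mulgA mulKVg mulgV. Qed.
Lemma invg1 : 1g^-1g = 1g.
Proof. by rewrite -{2}(mulVg 1g) mulg1. Qed.

Lemma conjg1 (a : G) : a ^g 1g = a.
Proof. by rewrite invg1 mul1g mulg1. Qed.
Lemma conjgM (a g h : G) : a ^g (g *g h) = (a ^g g) ^g h.
Proof. by rewrite invMg !mulgA. Qed.
Lemma conjVg (a g : G) : a^-1g ^g g = (a ^g g)^-1g.
Proof. by rewrite !invMg invgK mulgA. Qed.
Lemma conjMg (a b g : G) : (a *g b) ^g g = (a ^g g) *g (b ^g g).
Proof. by rewrite -!mulgA mulKVg. Qed.
Lemma conjg_fix (a g : G) : g *g a = a *g g -> a ^g g = a.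
Proof. by move=> ga; rewrite -ga mulKg. Qed.
Lemma conjg_mulR (a h : G) : a ^g h = a *g gcomm a h.
Proof. by rewrite /gcomm mulKVg. Qed.

Lemma gexpS (a : G) n : gexp a n.+1 = a *g gexp a n.
Proof. by []. Qed.
Lemma gexpD (a : G) m n : gexp a (m + n) = gexp a m *g gexp a n.
Proof. by elim: m => [|m IH]; rewrite ?mul1g //= IH mulgA. Qed.
Lemma gexpM (a : G) m n : gexp a (m * n) = gexp (gexp a m) n.
Proof. by elim: n => [|n IH]; rewrite ?muln0 // mulnS gexpD IH. Qed.
Lemma gexpC (a : G) n : a *g gexp a n = gexp a n *g a.
Proof. by rewrite -gexpS -addn1 gexpD /= mulg1. Qed.
Lemma conjXg (a g : G) n : gexp a n ^g g = gexp (a ^g g) n.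
Proof. by elim: n => [|n IH]; rewrite /= ?mul1g ?mulVg // conjMg IH. Qed.

Lemma subgroup1 (H : set G) : subgroup H -> H 1g. Proof. by case. Qed.
Lemma subgroupM (H : set G) a b : subgroup H -> H a -> H b -> H (a *g b).
Proof. by case=> _ + _; apply. Qed.
Lemma subgroupV (H : set G) a : subgroup H -> H a -> H a^-1g.
Proof. by case=> _ _; apply. Qed.
Lemma subgroupVE (H : set G) a : subgroup H -> H a^-1g = H a.
Proof.
move=> sH; apply/propext; split=> [|/(subgroupV sH)//].
by move=> /(subgroupV sH); rewrite invgK.
Qed.
Lemma subgroupMl (H : set G) a b : subgroup H -> H a -> H (a *g b) = H b.
Proof.
move=> sH Ha; apply/propext; split=> [|/(subgroupM sH Ha)//].
by move=> Hab; rewrite -(mulKg a b); apply: subgroupM (subgroupV sH Ha) Hab.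
Qed.
Lemma subgroup_exp (H : set G) a n : subgroup H -> H a -> H (gexp a n).
Proof. by move=> sH Ha; elim: n => [|n IH]; [exact: subgroup1 | exact: subgroupM]. Qed.
Lemma subgroup_coset (H : set G) a u v :
  subgroup H -> H (a^-1g *g u) -> H (a^-1g *g v) -> H (u^-1g *g v).
Proof.
move=> sH Hu Hv; have -> : u^-1g *g v = (a^-1g *g u)^-1g *g (a^-1g *g v).
  by rewrite invMg invgK -mulgA mulKVg.
exact: subgroupM sH (subgroupV sH Hu) Hv.
Qed.

Lemma subgroup_gen (S : set G) : subgroup (gen S).
Proof.
split=> [K sK _|a b Ha Hb K sK SK|a Ha K sK SK]; first exact: subgroup1.
  by apply: subgroupM; [| apply: Ha | apply: Hb].
by apply: subgroupV; last apply: Ha.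
Qed.
Lemma sub_gen (S : set G) : S `<=` gen S.
Proof. by move=> a Sa K _; apply. Qed.
Lemma gen_min (S K : set G) : subgroup K -> S `<=` K -> gen S `<=` K.
Proof. by move=> sK SK a; apply. Qed.
Lemma gen_mono (S T : set G) : S `<=` T -> gen S `<=` gen T.
Proof. by move=> ST; apply: gen_min (subgroup_gen T) _ => a /ST/sub_gen. Qed.

Lemma normal_subgroup (N : set G) : normal N -> subgroup N. Proof. by case. Qed.
Lemma normal_conj (N : set G) g h : normal N -> N h -> N (h ^g g).
Proof. by case=> _; apply. Qed.
Lemma normal_conjV (N : set G) g h : normal N -> N (h ^g g) -> N h.
Proof.
move=> nN /(normal_conj (g^-1g) nN).
by rewrite -conjgM mulgV conjg1.
Qed.

Lemma centralizer_subgroup (y : G) : subgroup (fun z => z *g y = y *g z).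
Proof.
split=> [|a b ea eb|a ea]; first by rewrite mul1g mulg1.
  by rewrite -mulgA eb !mulgA ea.
by apply: (@mulgI a); rewrite mulKVg mulgA ea mulgK.
Qed.

Lemma normal_closure_normal (y : G) : normal (normal_closure y).
Proof.
split=> [|g h]; first exact: subgroup_gen.
have sC : subgroup (fun h => normal_closure y (h ^g g)).
  split=> [|a b Ha Hb|a Ha]; first by rewrite mul1g mulVg; apply: subgroup1 (subgroup_gen _).
    by rewrite conjMg; apply: subgroupM (subgroup_gen _) Ha Hb.
  by rewrite conjVg; apply: subgroupV (subgroup_gen _) Ha.
apply: gen_min sC _ h => _ [c ->]; apply: sub_gen; exists (c *g g).
by rewrite conjgM.
Qed.

Lemma frattini_p_sub p (H : set G) : subgroup H -> frattini_p p H `<=` H.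
Proof.
move=> sH; apply: gen_min => // _ [[a [b [Ha Hb ->]]]|[c [Hc ->]]].
  by rewrite /gcomm; repeat apply: subgroupM => //; apply: subgroupV.
exact: subgroup_exp.
Qed.

End GroupLaws.

Section Quotient.
Variable G : groupOps.
Hypothesis gG : is_group G.
Variable N : set G.
Hypothesis nN : normal N.
Local Notation "1g" := (gone G).
Local Notation Q := (quot N).
Let sN := normal_subgroup nN.

Lemma qmk_eq (g h : G) : qmk N g = qmk N h <-> N (g^-1g *g h).
Proof.
split=> [/(congr1 sval) /= e | Ngh].
  have : lcoset h N h by rewrite /lcoset mulVg //; apply: subgroup1.
  by rewrite -e.
apply: eq_exist; apply/funext => z; apply/propext; rewrite /lcoset.
by rewrite -{1}(mulKVg gG h z) (mulgA gG) subgroupMl.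
Qed.

Lemma qrepK (A : Q) : qmk N (qrep A) = A.
Proof. by case: A => S pf; apply: eq_exist; rewrite /qrep /=; case: (cid pf). Qed.

Lemma qmk_surj (A : Q) : exists g, A = qmk N g.
Proof. by exists (qrep A); rewrite qrepK. Qed.

Lemma qmkM (g h : G) : qmk N (g *g h) = @gmul Q (qmk N g) (qmk N h).
Proof.
apply/qmk_eq; set g' := qrep (qmk N g); set h' := qrep (qmk N h).
have /qmk_eq Ng : qmk N g = qmk N g' by rewrite qrepK.
have /qmk_eq Nh : qmk N h = qmk N h' by rewrite qrepK.
have -> : (g *g h)^-1g *g (g' *g h') = (g^-1g *g g') ^g h *g (h^-1g *g h').
  by rewrite (invMg gG) !(mulgA gG) (mulgK gG).
by apply: subgroupM => //; apply: normal_conj.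
Qed.

Lemma qmkV (g : G) : qmk N (g^-1g) = @ginv Q (qmk N g).
Proof.
apply/qmk_eq; set g' := qrep (qmk N g).
have /qmk_eq Ng : qmk N g = qmk N g' by rewrite qrepK.
have -> : (g^-1g)^-1g *g g'^-1g = (g^-1g *g g')^-1g ^g g^-1g.
  by rewrite !(invMg gG) !(invgK gG) !(mulgA gG) (mulgK gG).
by apply: normal_conj => //; apply: subgroupV.
Qed.

Lemma quot_group : is_group Q.
Proof.
split=> [A B C|A|A]; have [a ->] := qmk_surj A.
- by have [b ->] := qmk_surj B; have [c ->] := qmk_surj C; rewrite -!qmkM (mulgA gG).
- by rewrite -qmkM (mul1g gG).
- by rewrite -qmkV -qmkM (mulVg gG).
Qed.

Lemma qmk_exp (g : G) n : @gexp Q (qmk N g) n = qmk N (gexp g n).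
Proof. by elim: n => [|n IH] //; rewrite !gexpS IH qmkM. Qed.

Lemma qmk_comm (a b : G) : @gcomm Q (qmk N a) (qmk N b) = qmk N (gcomm a b).
Proof. by rewrite /gcomm !qmkM !qmkV. Qed.

Lemma qmk_gen (S : set G) : gen S `<=` fun g => @gen Q (qmk N @` S) (qmk N g).
Proof.
apply: gen_min => [|g Sg]; last by apply: sub_gen; exists g.
split=> [|a b Ha Hb|a Ha]; first exact: subgroup1 (subgroup_gen _).
  by rewrite qmkM; apply: subgroupM (subgroup_gen _) Ha Hb.
by rewrite qmkV; apply: subgroupV (subgroup_gen _) Ha.
Qed.

Lemma quot_finitely_generated : finitely_generated G -> finitely_generated Q.
Proof.
move=> [n [u gu]]; exists n, (qmk N \o u); apply/seteqP; split => // A _.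
have [g ->] := qmk_surj A; have : gen (range u) g by rewrite gu.
by move/qmk_gen; rewrite image_comp.
Qed.

Definition qpreim (K : set Q) : set G := fun g => K (qmk N g).

Lemma qpreim_subgroup (K : set Q) : subgroup K -> subgroup (qpreim K).
Proof.
move=> sK; split=> [|a b Ka Kb|a Ka]; rewrite /qpreim ?qmkM ?qmkV.
- exact: subgroup1 sK.
- exact: subgroupM sK Ka Kb.
- exact: subgroupV sK Ka.
Qed.

Lemma qpreim_normal (K : set Q) : normal K -> normal (qpreim K).
Proof.
move=> [sK nK]; split=> [|g h Kh]; first exact: qpreim_subgroup.
by rewrite /qpreim !qmkM qmkV; apply: nK.
Qed.

Lemma qmk_image_subgroup (A : set G) : subgroup A -> subgroup (qmk N @` A : set Q).
Proof.
move=> sA; split=> [|_ _ [a Aa <-] [b Ab <-]|_ [a Aa <-]].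
- by exists 1g => //; apply: subgroup1 sA.
- by exists (a *g b); rewrite ?qmkM //; apply: subgroupM sA Aa Ab.
- by exists (a^-1g); rewrite ?qmkV //; apply: subgroupV sA Aa.
Qed.

Lemma sub_qpreim (K : set Q) : subgroup K -> N `<=` qpreim K.
Proof.
move=> sK z Nz; rewrite /qpreim (_ : qmk N z = qmk N 1g); first exact: subgroup1 sK.
by apply/qmk_eq; rewrite (mulg1 gG) (subgroupVE gG _ sN).
Qed.

Lemma qpreim_index (K : set Q) m : has_index K m -> has_index (qpreim K) m.
Proof.
move=> [f hf]; exists (fun i => qrep (f i)) => g.
have e i : lcoset (qrep (f i)) (qpreim K) g = lcoset (f i) K (qmk N g).
  by rewrite /lcoset /qpreim qmkM qmkV qrepK.
have [i [Ki ui]] := hf (qmk N g); exists i; split=> [|j]; rewrite /= e //.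
exact: ui.
Qed.

Lemma frattini_p_qpreim p (K : set Q) :
  frattini_p p K `<=` qmk N @` frattini_p p (qpreim K).
Proof.
apply: gen_min (qmk_image_subgroup (subgroup_gen _)) _ => _ [[u [v [Ku Kv ->]]]|[w [Kw ->]]].
  exists (gcomm (qrep u) (qrep v)); last by rewrite -qmk_comm !qrepK.
  by apply: sub_gen; left; exists (qrep u), (qrep v); rewrite /qpreim !qrepK.
exists (gexp (qrep w) p); last by rewrite -qmk_exp qrepK.
by apply: sub_gen; right; exists (qrep w); rewrite /qpreim qrepK.
Qed.

Lemma gen_mod_p_qpreim p (K : set Q) d c (b : 'I_c -> G) :
  subgroup K -> gen_mod_p p K d -> (forall j, qpreim K (b j)) ->
  N `<=` gen (range b `|` frattini_p p (qpreim K)) -> gen_mod_p p (qpreim K) (d + c).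
Proof.
move=> sK [a [Ka ga]] Hb Nb; have sH := qpreim_subgroup sK.
pose e i := match split i with inl j => qrep (a j) | inr j => b j end.
have ea j : e (lshift c j) = qrep (a j) by rewrite /e -[lshift c j]/(unsplit (inl j)) unsplitK.
have eb j : e (rshift d j) = b j by rewrite /e -[rshift d j]/(unsplit (inr j)) unsplitK.
have He i : qpreim K (e i).
  by rewrite /e; case: (split i) => j; rewrite /qpreim ?qrepK; [apply: Ka | apply: Hb].
exists e; split=> //; apply/seteqP; split=> [|h Hh].
  by apply: gen_min => // z [[i _ <-]|/(frattini_p_sub sH)].
set A := gen (range e `|` frattini_p p (qpreim K)); have sA : subgroup A := subgroup_gen _.
have NA : N `<=` A.
  apply: subset_trans Nb (gen_mono _) => z [[j _ <-]|Fz]; last by right.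
  by left; exists (rshift d j); rewrite ?eb.
have KA : K `<=` qmk N @` A.
  rewrite -ga; apply: gen_min (qmk_image_subgroup sA) _ => q [[j _ <-]|].
    exists (qrep (a j)); rewrite ?qrepK //.
    by apply: sub_gen; left; exists (lshift c j); rewrite ?ea.
  by case/frattini_p_qpreim => g Fg <-; exists g => //; apply: sub_gen; right.
have [g Ag /qmk_eq /NA Agh] := KA _ Hh.
by rewrite -(mulKVg gG g h); apply: subgroupM sA Ag Agh.
Qed.

End Quotient.

Section Transversal.
Variable G : groupOps.
Hypothesis gG : is_group G.
Local Notation "1g" := (gone G).
Variable H : set G.
Hypothesis sH : subgroup H.
Variables (M : nat) (f : 'I_M -> G).
Hypothesis hf : forall g, exists! i, lcoset (f i) H g.

Definition coset_idx g := sval (cid (hf g)).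

Lemma coset_idxP g : H ((f (coset_idx g))^-1g *g g).
Proof. by rewrite /coset_idx; case: (cid (hf g)) => i []. Qed.

Lemma coset_idx_uniq g i : H ((f i)^-1g *g g) -> coset_idx g = i.
Proof. by rewrite /coset_idx; case: (cid (hf g)) => j [/= _ u]; exact: u. Qed.

Definition schreier g i := (f (coset_idx (g *g f i)))^-1g *g (g *g f i).

Lemma schreier_in g i : H (schreier g i).
Proof. exact: coset_idxP. Qed.

Lemma schreier1 i : schreier 1g i = 1g.
Proof.
have fi : coset_idx (f i) = i.
  by apply: coset_idx_uniq; rewrite (mulVg gG); apply: subgroup1.
by rewrite /schreier (mul1g gG) fi (mulVg gG).
Qed.

Lemma schreierM g1 g2 i :
  schreier (g1 *g g2) i = schreier g1 (coset_idx (g2 *g f i)) *g schreier g2 i.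
Proof.
set j := coset_idx (g2 *g f i).
have factor (a : G) : a^-1g *g (g1 *g g2 *g f i) = a^-1g *g (g1 *g f j) *g schreier g2 i.
  by rewrite /schreier -!(mulgA gG) (mulKVg gG).
rewrite /schreier factor; congr (_^-1g *g _ *g _); congr (f _).
apply: coset_idx_uniq; rewrite factor.
exact: subgroupM sH (schreier_in g1 j) (schreier_in g2 i).
Qed.

Lemma schreierV g i : schreier g^-1g i = (schreier g (coset_idx (g^-1g *g f i)))^-1g.
Proof.
set j := coset_idx (g^-1g *g f i).
have e : ((f i)^-1g *g (g *g f j))^-1g = schreier g^-1g i.
  by rewrite /schreier -/j !(invMg gG) !(invgK gG) (mulgA gG).
have ej : coset_idx (g *g f j) = i.
  by apply: coset_idx_uniq; rewrite -(subgroupVE gG _ sH) e; apply: schreier_in.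
by rewrite [in RHS]/schreier ej e.
Qed.

Lemma finite_index_gen n (u : 'I_n -> G) : gen (range u) = setT ->
  exists d (a : 'I_d -> G), (forall i, H (a i)) /\ gen (range a) = H.
Proof.
move=> gu; set i0 := coset_idx 1g.
have Hf0 : H (f i0) by rewrite -(subgroupVE gG _ sH) -(mulg1 gG (_^-1g)); apply: coset_idxP.
(* The Schreier generators only give [H] up to conjugation by [f i0], an
   element of [H], so [f i0] is adjoined to them. *)
pose T := option ('I_n * 'I_M)%type.
pose a' (t : T) := if t is Some (s, i) then schreier (u s) i else f i0.
pose a (j : 'I_#|{: T}|) := a' (enum_val j).
have ra t : range a (a' t) by exists (enum_rank t) => //; rewrite /a enum_rankK.
pose A := gen (range a); have sA : subgroup A := subgroup_gen _.
have sP : subgroup (fun g => forall i, A (schreier g i)).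
  split=> [i|g1 g2 P1 P2 i|g P i]; first by rewrite schreier1; apply: subgroup1 sA.
    by rewrite schreierM; apply: subgroupM sA (P1 _) (P2 _).
  by rewrite schreierV; apply: subgroupV sA (P _).
have uP : range u `<=` (fun g => forall i, A (schreier g i)).
  by move=> _ [s _ <-] j; apply: sub_gen; apply: (ra (Some (s, j))).
have Pall g : forall i, A (schreier g i).
  by have /(gen_min sP uP) : gen (range u) g by rewrite gu.
have Ha j : H (a j).
  by rewrite /a; case: (enum_val j) => [[s i]|] /=; [exact: schreier_in | exact: Hf0].
exists #|{: T}|, a; split=> //; apply/seteqP; split=> [|h Hh].
  by apply: gen_min => // _ [j _ <-].
have Af0 : A (f i0) by apply: sub_gen; apply: (ra None).
have e : coset_idx (h *g f i0) = i0.
  by apply: coset_idx_uniq; apply: subgroupM (subgroupV sH Hf0) (subgroupM sH Hh Hf0).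
have := Pall h i0; rewrite /schreier e => Ah.
have -> : h = f i0 *g ((f i0)^-1g *g (h *g f i0)) *g (f i0)^-1g.
  by rewrite (mulKVg gG) (mulgK gG).
exact: subgroupM sA (subgroupM sA Af0 Ah) (subgroupV sA Af0).
Qed.

End Transversal.

Section DpFacts.
Variable G : groupOps.
Hypothesis gG : is_group G.

Lemma gen_mod_p_exists p (H : set G) m :
  finitely_generated G -> subgroup H -> has_index H m -> exists d, gen_mod_p p H d.
Proof.
move=> [n [u gu]] sH [f hf].
have [d [a [Ha ga]]] := finite_index_gen gG sH hf gu.
exists d, a; split=> //; apply/seteqP; split.
  by apply: gen_min => // z [[i _ <-]|/(frattini_p_sub sH)].
by rewrite -{1}ga; apply: gen_mono; apply: subsetUl.
Qed.

Lemma dpP p (H : set G) : (exists d, gen_mod_p p H d) ->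
  gen_mod_p p H (dp p H) /\ forall d, gen_mod_p p H d -> (dp p H <= d)%N.
Proof.
move=> [d0 hd0].
have [|m /asboolP hm mmin] := @ex_minnP (fun d => `[< gen_mod_p p H d >]).
  by exists d0; apply/asboolP.
have : exists d, gen_mod_p p H d /\ forall d', gen_mod_p p H d' -> (d <= d')%N.
  by exists m; split=> // d hd; apply/mmin/asboolP.
by move/(xgetPex 0%N).
Qed.

End DpFacts.

Section Orbits.
Variable G : groupOps.
Hypothesis gG : is_group G.
Local Notation "1g" := (gone G).
Variable H : set G.
Hypothesis nH : normal H.
Let sH := normal_subgroup nH.
Variables (M : nat) (f : 'I_M -> G).
Hypothesis hf : forall g, exists! i, lcoset (f i) H g.
Variable x : G.
Local Notation X := (gen [set x]).
Let sX : subgroup X := subgroup_gen _.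

Definition orbit_rel i j := exists2 z, X z & H ((f i)^-1g *g (z *g f j)).

Lemma orbit_rel_refl i : orbit_rel i i.
Proof.
by exists 1g; [apply: subgroup1 sX | rewrite (mul1g gG) (mulVg gG); apply: subgroup1 sH].
Qed.

Lemma orbit_rel_sym i j : orbit_rel i j -> orbit_rel j i.
Proof.
move=> [z Xz Hz]; exists z^-1g; first exact: subgroupV sX Xz.
by move: Hz; rewrite -(subgroupVE gG _ sH) !(invMg gG) (invgK gG) (mulgA gG).
Qed.

Lemma orbit_rel_trans i j l : orbit_rel i j -> orbit_rel j l -> orbit_rel i l.
Proof.
move=> [z1 X1 H1] [z2 X2 H2]; exists (z1 *g z2); first exact: subgroupM sX X1 X2.
have -> : (f i)^-1g *g (z1 *g z2 *g f l) =
    (f i)^-1g *g (z1 *g f j) *g ((f j)^-1g *g (z2 *g f l)).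
  by rewrite -!(mulgA gG) (mulKVg gG).
exact: subgroupM sH H1 H2.
Qed.

Definition orbit_reps : {set 'I_M} :=
  [set r | `[< forall j, orbit_rel r j -> (r <= j)%N >]].

Lemma orbit_reps_exists i : exists2 r, r \in orbit_reps & orbit_rel i r.
Proof.
case: (@arg_minnP _ i (fun j => `[< orbit_rel i j >]) val).
  exact/asboolP/orbit_rel_refl.
move=> r /asboolP ir rmin.
exists r => //; rewrite inE; apply/asboolP => j rj.
by apply/rmin/asboolP; apply: orbit_rel_trans rj.
Qed.

Lemma orbit_reps_eq r1 r2 :
  r1 \in orbit_reps -> r2 \in orbit_reps -> orbit_rel r1 r2 -> r1 = r2.
Proof.
rewrite !inE => /asboolP min1 /asboolP min2 r12; apply: val_inj.
by apply/eqP; rewrite eqn_leq min1 // min2 //; apply: orbit_rel_sym.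
Qed.

Section Conjugates.
Variables (p : nat) (y : G).
Hypotheses (Hy : H y) (xy : x *g y = y *g x).

Definition orbit_conj (t : 'I_#|orbit_reps|) := y ^g f (enum_val t).

Lemma orbit_conj_in t : H (orbit_conj t).
Proof. exact: normal_conj. Qed.

Lemma conj_in_orbit_gen g : gen (range orbit_conj `|` frattini_p p H) (y ^g g).
Proof.
set i := coset_idx hf g.
have [r repr [z Xz Hz]] := orbit_reps_exists i.
pose h := (z *g f r)^-1g *g g.
have Hh : H h := subgroup_coset gG sH Hz (coset_idxP hf g).
have xC : [set x] `<=` (fun z => z *g y = y *g z) by move=> _ ->.
have zy : y ^g z = y by apply/conjg_fix/(gen_min (centralizer_subgroup gG y) xC).
pose t := enum_rank_in repr r.
have et : orbit_conj t = y ^g f r by rewrite /orbit_conj /t enum_rankK_in.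
have -> : y ^g g = orbit_conj t *g gcomm (orbit_conj t) h.
  by rewrite -(conjg_mulR gG) et -(mulKVg gG (z *g f r) g) -/h !(conjgM gG) zy.
apply: subgroupM (subgroup_gen _) _ _; apply: sub_gen; first by left; exists t.
by right; apply: sub_gen; left; exists (orbit_conj t), h; split=> //; apply: orbit_conj_in.
Qed.

End Conjugates.

Section Counting.
Variable m : nat.
Hypothesis min_m : forall r, (0 < r)%N -> H (gexp x r) -> (m <= r)%N.

Lemma exp_coset_inj a c : (a < m)%N -> (c < m)%N ->
  H ((gexp x c)^-1g *g gexp x a) -> a = c.
Proof.
wlog ca : a c / (c <= a)%N => [wlog am cm Hca|am _ Hca].
  case: (leqP c a) => [ca|/ltnW ac]; first exact: wlog.
  apply/esym/(wlog _ _ ac cm am); rewrite -(subgroupVE gG _ sH).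
  by rewrite (invMg gG) (invgK gG).
have Hd : H (gexp x (a - c)) by rewrite -(mulKg gG (gexp x c) (gexp x _)) -(gexpD gG) subnKC.
case: (posnP (a - c)) => [/eqP|d0].
  by rewrite subn_eq0 => ac; apply/eqP; rewrite eqn_leq ac.
by have := min_m d0 Hd; rewrite leqNgt (leq_ltn_trans (leq_subr c a) am).
Qed.

Lemma card_orbit_reps : (#|orbit_reps| * m <= M)%N.
Proof.
pose phi (q : 'I_#|orbit_reps| * 'I_m) :=
  coset_idx hf (gexp x q.2 *g f (enum_val q.1)).
suff /leq_card : injective phi by rewrite card_prod !card_ord.
move=> [t1 s1] [t2 s2]; rewrite /phi /=; set r1 := enum_val t1; set r2 := enum_val t2.
move=> e; have := coset_idxP hf (gexp x s2 *g f r2); rewrite -e.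
move/(subgroup_coset gG sH (coset_idxP hf _)).
set w := (gexp x s1)^-1g *g gexp x s2.
have -> : (gexp x s1 *g f r1)^-1g *g (gexp x s2 *g f r2) = (f r1)^-1g *g (w *g f r2).
  by rewrite (invMg gG) !(mulgA gG).
move=> Hw; have Xw : X w.
  have Xexp s : X (gexp x s) by apply: subgroup_exp sX _; apply: sub_gen.
  exact: subgroupM sX (subgroupV sX (Xexp _)) (Xexp _).
have er : r1 = r2 by apply: orbit_reps_eq; rewrite ?enum_valP //; exists w.
have et : t1 = t2 by apply: enum_val_inj.
rewrite et; congr (_, _); apply/val_inj/esym/exp_coset_inj; rewrite ?ltn_ord //.
by rewrite er in Hw; apply: normal_conjV nH Hw.
Qed.

End Counting.
End Orbits.

Section NormalClosureOfPower.
Variable G : groupOps.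
Hypothesis gG : is_group G.

Lemma min_exp_dvd (H : set G) x m n : subgroup H -> (0 < m)%N -> H (gexp x m) ->
  (forall r, (0 < r)%N -> H (gexp x r) -> (m <= r)%N) -> H (gexp x n) -> (m %| n)%N.
Proof.
move=> sH m0 Hm min_m; rewrite {1}(divn_eq n m) (gexpD gG) mulnC (gexpM gG).
rewrite (subgroupMl gG _ sH (subgroup_exp _ sH Hm)) => Hr.
case: (posnP (n %% m)) => [r0|r0]; first by rewrite /dvdn r0.
by have := min_m _ r0 Hr; rewrite leqNgt ltn_pmod.
Qed.

Lemma frattini_p_conj_exp p (H : set G) a s g :
  normal H -> H a -> frattini_p p H (gexp a (s * p) ^g g).
Proof.
move=> nH Ha; rewrite (gexpM gG) (conjXg gG); apply: sub_gen; right.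
exists (gexp a s ^g g); split=> //.
exact: normal_conj nH (subgroup_exp _ (normal_subgroup nH) Ha).
Qed.

Lemma normal_closure_exp_sub p k (H : set G) M (f : 'I_M -> G) x :
  prime p -> normal H -> (forall g, exists! i, lcoset (f i) H g) -> H (gexp x (p ^ k)) ->
  exists c (b : 'I_c -> G), [/\ forall j, H (b j),
    normal_closure (gexp x (p ^ k)) `<=` gen (range b `|` frattini_p p H) &
    (c * p ^ k <= M)%N].
Proof.
move=> pp nH hf Hy; have sH := normal_subgroup nH; set y := gexp x (p ^ k).
have conjs_sub c (b : 'I_c -> G) :
    (forall g, gen (range b `|` frattini_p p H) (y ^g g)) ->
    normal_closure y `<=` gen (range b `|` frattini_p p H).
  by move=> Cb; apply: gen_min (subgroup_gen _) _ => _ [g ->].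
have [|m /andP[m0 /asboolP Hm] min_m] := @ex_minnP (fun m => (0 < m) && `[< H (gexp x m) >]).
  by exists (p ^ k); rewrite expn_gt0 prime_gt0 //; apply/asboolP.
have {}min_m r : (0 < r)%N -> H (gexp x r) -> (m <= r)%N.
  by move=> r0 Hr; apply: min_m; rewrite r0; apply/asboolP.
have /(dvdn_pfactor _ _ pp) [j jk mj] := min_exp_dvd sH m0 Hm min_m Hy.
case: (ltnP j k) => [jk'|kj].
  exists 0%N, (fun _ => gone G); split=> // [_|]; first exact: subgroup1.
  apply: conjs_sub => g; apply: sub_gen; right.
  have -> : y = gexp (gexp x m) (p ^ (k - j).-1 * p).
    by rewrite -(gexpM gG) mj -expnSr prednK ?subn_gt0 // -expnD subnKC // ltnW.
  exact: frattini_p_conj_exp.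
have em : m = p ^ k by rewrite mj; congr (_ ^ _); apply/eqP; rewrite eqn_leq jk.
rewrite {}em in min_m.
exists #|orbit_reps H f x|, (@orbit_conj _ H _ f x y); split.
- exact: orbit_conj_in.
- by apply: conjs_sub; apply: conj_in_orbit_gen; rewrite // (gexpC gG).
- exact: card_orbit_reps.
Qed.

End NormalClosureOfPower.

Lemma qpreim_dp_le (G : groupOps) p k (x : G)
    (K : set (quot (normal_closure (gexp x (p ^ k))))) n :
  is_group G -> finitely_generated G -> prime p -> normal K -> has_index K (p ^ n) ->
  exists (H : set G) c, [/\ normal H, has_index H (p ^ n),
    (dp p H <= dp p K + c)%N & (c * p ^ k <= p ^ n)%N].
Proof.
move=> gG fg pp nK hK; set y := gexp x (p ^ k).
have nN := normal_closure_normal gG y; have sK := normal_subgroup nK.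
have hH := qpreim_index gG nN hK; have [fH hfH] := hH.
have Hy : qpreim K y.
  by apply: (sub_qpreim gG nN sK); apply: sub_gen; exists (gone G); rewrite (conjg1 gG).
have [c [b [Hb Nb cle]]] := normal_closure_exp_sub gG pp (qpreim_normal gG nN nK) hfH Hy.
have exK := gen_mod_p_exists (quot_group gG nN) p (quot_finitely_generated gG nN fg) sK hK.
have gmH := gen_mod_p_qpreim gG nN sK (dpP exK).1 Hb Nb.
exists (qpreim K), c; split=> //; first exact: qpreim_normal.
exact: (dpP (ex_intro _ _ gmH)).2.
Qed.

Local Close Scope classical_set_scope.
Local Open Scope ring_scope.

Lemma has_index_setT (G : groupOps) : has_index (@setT G) 1.
Proof.
by exists (fun _ => gone G) => g; exists ord0; split=> [|j _]; [exact: I | rewrite (ord1 j)].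
Qed.

Lemma RGp_le (R : realType) (G : groupOps) p (H : set G) n : (0 < p)%N ->
  normal H -> has_index H (p ^ n) -> RGp G R p <= ((dp p H)%:R - 1) / (p ^ n)%:R.
Proof.
move=> p0 nH hH; apply: ge_inf; last by exists H, n.
exists (-1) => _ [H' [n' [_ _ ->]]].
have P1 : 1 <= (p ^ n')%:R :> R by rewrite ler1n expn_gt0 p0.
have d0 : 0 <= (dp p H')%:R :> R := ler0n _ _.
by rewrite ler_pdivlMr ?(lt_le_trans ltr01) //; lra.
Qed.

Lemma dp_ratio_le (R : realType) (dH dK c P Pk : nat) : (0 < P)%N -> (0 < Pk)%N ->
  (dH <= dK + c)%N -> (c * Pk <= P)%N ->
  (dH%:R - 1) / P%:R - Pk%:R^-1 <= (dK%:R - 1) / P%:R :> R.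
Proof.
move=> P0 Pk0 dle cle.
have cP : c%:R / P%:R <= Pk%:R^-1 :> R.
  by rewrite ler_pdivrMr ?ltr0n // mulrC ler_pdivlMr ?ltr0n // -natrM ler_nat.
have dle' : dH%:R <= dK%:R + c%:R :> R by rewrite -natrD ler_nat.
have : (dH%:R - 1) / P%:R <= (dK%:R - 1) / P%:R + c%:R / P%:R :> R.
  by rewrite -mulrDl ler_wpM2r ?invr_ge0 ?ler0n //; lra.
by move: cP; lra.
Qed.

Unset Implicit Arguments.
Theorem theorem3p2 (R : realType) (G : groupOps) (p : nat) (x : G) (k : nat) :
  is_group G -> finitely_generated G -> prime p ->
  RGp G R p - ((p ^ k)%N)%:R^-1 <=
    RGp (quot (normal_closure (gexp x (p ^ k)%N))) R p.
Proof.
move=> gG fg pp; have p0 := prime_gt0 pp.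
apply: lb_le_inf.
  by eexists; exists setT, 0%N; split=> //; rewrite expn0; apply: has_index_setT.
move=> _ [K [n [nK hK ->]]].
have [H [c [nH hH dle cle]]] := qpreim_dp_le gG fg pp nK hK.
apply: le_trans (dp_ratio_le R _ _ dle cle); rewrite ?expn_gt0 ?p0 //.
by rewrite lerD2r; apply: RGp_le.
Qed.
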